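(* Let $n\ge4$, let $\mathbf A,\mathbf B\in\mathcal G_n$, let $f\colon\mathbf A\to\mathbf B$ be a homomorphism and let $\sigma\in\Sigma_n$. Then the following are equivalent: (1) $f$ is an embedding (injective); (2) for each $x\in D^\sigma(\mathbf A)$ there exists $y\in D^\sigma(\mathbf B)$ such that $y\circ f\simeq^\sigma_{D^\sigma(\mathbf A)}x$.
   Context: $\mathbf C_n$ is the Heyting algebra on the chain $\{0<1<\dots<n-1\}$, with min, max, $\bot=0$, $\top=n-1$, $a\to b=\top$ if $a\le b$, $a\to b=b$ if $b<a$. $\mathcal G_n$ is the class of algebras isomorphic to subalgebras of direct powers of $\mathbf C_n$; $\mathcal G_n(\mathbf A,\mathbf C_n)$ is the set of Heyting homomorphisms $\mathbf A\to\mathbf C_n$. For $n\ge4$: for $1\le i\le n-2$, $h_i$ is the endomorphism of $\mathbf C_n$ with $h_i(k)=k+1$ if $i\le k<n-1$ and $h_i(k)=k$ otherwise. For $1\le i\le n-3$, $g_i$ is the partial map with domain $C_n\setminus\{i\}$ with $g_i(i+1)=i$, $g_i(k)=k$ for $k\notin\{i,i+1\}$, and $f_i\colon C_n\setminus\{i+1\}\to C_n\setminus\{i\}$ is its inverse. $\Sigma_n=\{f_1,g_1\}\times\dots\times\{f_{n-3},g_{n-3}\}\times\{h_1,\dots,h_{n-2}\}$, elements written $\sigma=(\sigma_1,\dots,\sigma_{n-2})$. $D^\sigma(\mathbf A)$ is $\mathcal G_n(\mathbf A,\mathbf C_n)$ with lifted (partial) operations $\sigma_i^{\mathbf X}(x)=\sigma_i\circ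 x$, defined iff $\operatorname{ran}x\subseteq\operatorname{dom}\sigma_i$. For $\mathbf X=D^\sigma(\mathbf A)$, $x\simeq^\sigma_{\mathbf X}y$ iff $x=y$ or there is a finite sequence $x=z_0,\dots,z_N=y$ in $X$ such that for each $j<N$ some $i_j\in\{1,\dots,n-3\}$ satisfies $z_{j+1}=\sigma_{i_j}^{\mathbf X}(z_j)$ or $z_j=\sigma_{i_j}^{\mathbf X}(z_{j+1})$. *)

From HB Require Import structures.
From mathcomp Require Import all_boot.
From Stdlib Require Import Relations.
Set Implicit Arguments. Unset Strict Implicit. Unset Printing Implicit Defensive.

Record halg := HAlg {
  car :> Type;
  hmeet : car -> car -> car;
  hjoin : car -> car -> car;
  himp  : car -> car -> car;
  hbot  : car;
  htop  : car }.

Definition is_hom (A B : halg) (f : A -> B) : Prop :=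
  [/\ forall a b, f (hmeet a b) = hmeet (f a) (f b),
      forall a b, f (hjoin a b) = hjoin (f a) (f b),
      forall a b, f (himp a b) = himp (f a) (f b),
      f (hbot A) = hbot B &
      f (htop A) = htop B].

(* The chain C_n on {0 < 1 < ... < n-1}; the carrier is 'I_(n.-1.+1),
   which has exactly n elements whenever n >= 1. *)
Definition Cmeet n (a b : 'I_n.-1.+1) : 'I_n.-1.+1 := if a <= b then a else b.
Definition Cjoin n (a b : 'I_n.-1.+1) : 'I_n.-1.+1 := if a <= b then b else a.
Definition Cimp n (a b : 'I_n.-1.+1) : 'I_n.-1.+1 := if a <= b then ord_max else b.
Definition C (n : nat) : halg :=
  @HAlg 'I_n.-1.+1 (@Cmeet n) (@Cjoin n) (@Cimp n) ord0 ord_max.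

Definition Pow (A : halg) (I : Type) : halg :=
  @HAlg (I -> A) (fun f g i => hmeet (f i) (g i)) (fun f g i => hjoin (f i) (g i))
        (fun f g i => himp (f i) (g i)) (fun _ => hbot A) (fun _ => htop A).

(* A is in G_n iff A is isomorphic to a subalgebra of some direct power of C_n,
   i.e. there is an injective homomorphism of A into some (C_n)^I. *)
Definition inG (n : nat) (A : halg) : Prop :=
  exists (I : Type) (e : A -> Pow (C n) I), is_hom e /\ injective e.

Definition fmap (i k : nat) : option nat :=
  if k == i.+1 then None else if k == i then Some i.+1 else Some k.
Definition gmap (i k : nat) : option nat :=
  if k == i then None else if k == i.+1 then Some i else Some k.
Definition hmap (n i k : nat) : nat :=
  if (i <= k) && (k < n.-1) then k.+1 else k.

(* sigma = (sigma_1, ..., sigma_{n-2}) in Sigma_n: the ffun gives, for the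
   component i = j+1 (j : 'I_(n-3)), true for f_i and false for g_i; the
   ordinal j : 'I_(n-2) encodes the last component h_{j+1}. *)
Definition Sigma (n : nat) : Type := ({ffun 'I_(n - 3) -> bool} * 'I_(n - 2))%type.

Definition sigma_comp (n : nat) (s : Sigma n) (i : nat) : nat -> option nat :=
  if i == 0 then fun _ => None else
  match @insub _ (fun j => j < n - 3) _ i.-1 with
  | Some j => if s.1 j then fmap i else gmap i
  | None => if i == n - 2 then fun k => Some (hmap n (nat_of_ord s.2).+1 k)
            else fun _ => None
  end.

(* y = sigma_i^X(x): the lifted partial operation is defined at x and yields y. *)
Definition lifted (n : nat) (s : Sigma n) (i : nat) (A : halg) (x y : A -> C n) : Prop :=
  forall a, sigma_comp s i (nat_of_ord (x a)) = Some (nat_of_ord (y a)).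

(* One step of the chain in X = D^sigma(A): both ends in X, and for some
   i in {1,...,n-3}, y = sigma_i^X(x) or x = sigma_i^X(y). *)
Definition sim_step (n : nat) (s : Sigma n) (A : halg) (x y : A -> C n) : Prop :=
  is_hom x /\ is_hom y /\
  exists i, 1 <= i <= n - 3 /\ (lifted s i x y \/ lifted s i y x).

Definition sim (n : nat) (s : Sigma n) (A : halg) : relation (A -> C n) :=
  clos_refl_trans (A -> C n) (@sim_step n s A).

(* (2) => (1): every step of a ~=^sigma-chain applies, pointwise, a partial
   map f_i or g_i that is injective where defined, so ~=^sigma-equivalent
   homomorphisms have the same kernel.  Points of A in G_n are separated by
   homomorphisms into C_n, hence so they are by y o f, and f is injective.

   (1) => (2): given x, an ultrafilter argument on the set of homomorphisms
   B -> C_n yields y with (y o f)(a) = top iff x(a) = top.  Since a <= b is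
   detected by a -> b = top, y o f and x then induce the same preorder on A.
   Any homomorphism is ~=^sigma-equivalent to a "packed" one (no gaps in its
   image below top) inducing the same preorder: lower a value v to v-1 while
   v-1 is missing, which is one g_{v-1}-step and decreases the sum of the
   image.  Two packed homomorphisms inducing the same preorder coincide, so
   y o f and x are ~=^sigma-equivalent. *)

From Pilot Require Import Defs.
From mathcomp Require Import all_boot zify.
From mathcomp Require Import boolp classical_sets filter.
From Stdlib Require Import Relations.
Set Implicit Arguments. Unset Strict Implicit. Unset Printing Implicit Defensive.
Local Open Scope classical_set_scope.

Section HomLaws.
Variables (A B : halg) (f : A -> B).
Hypothesis hf : is_hom f.

Lemma hom_meet a b : f (hmeet a b) = hmeet (f a) (f b). Proof. by case: hf. Qed.
Lemma hom_join a b : f (hjoin a b) = hjoin (f a) (f b). Proof. by case: hf. Qed.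
Lemma hom_imp a b : f (himp a b) = himp (f a) (f b). Proof. by case: hf. Qed.
Lemma hom_bot : f (hbot A) = hbot B. Proof. by case: hf. Qed.
Lemma hom_top : f (htop A) = htop B. Proof. by case: hf. Qed.

End HomLaws.

Section Chain.
Variable n : nat.
Local Notation T := 'I_n.-1.+1.

Lemma eq_max (k : T) : (k == ord_max) = (n.-1 <= k).
Proof. by apply/eqP/idP => [->|h] //=; apply: val_inj => /=; have := ltn_ord k; lia. Qed.

Lemma Cimp_top (k k' : T) : (Cimp k k' == ord_max) = (k <= k').
Proof.
rewrite /Cimp; case: leqP => h; first by rewrite eqxx.
by rewrite eq_max; have := ltn_ord k; lia.
Qed.

Lemma Cmeet_max (k k' : T) : Cmeet k k' = ord_max -> k = ord_max /\ k' = ord_max.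
Proof.
rewrite /Cmeet; have := ltn_ord k; have := ltn_ord k'.
by case: (leqP k k') => h ? ? /eqP; rewrite eq_max => h2; split; apply/eqP; rewrite eq_max; lia.
Qed.

Lemma Cjoin_max (k k' : T) : k = ord_max \/ k' = ord_max -> Cjoin k k' = ord_max.
Proof.
rewrite /Cjoin; have := ltn_ord k; have := ltn_ord k'.
by case: (leqP k k') => h ? ? [] e; rewrite e in h *; apply/eqP; rewrite eq_max //=; move: h => /= h; lia.
Qed.

Lemma relabel_hom (A : halg) (z : A -> C n) (psi : T -> T) : is_hom z ->
  psi ord0 = ord0 -> psi ord_max = ord_max ->
  (forall a b, z a <= z b -> psi (z a) <= psi (z b)) ->
  (forall a b, z b < z a -> psi (z a) <= psi (z b) -> psi (z b) = ord_max) ->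
  @is_hom A (C n) (fun a => psi (z a)).
Proof.
move=> hz p0 pm mono st.
have antisym a b : z b < z a -> psi (z b) <= psi (z a) -> psi (z a) <= psi (z b) ->
    psi (z a) = psi (z b).
  by move=> _ h1 h2; apply: val_inj; apply/eqP; rewrite eqn_leq h1 h2.
split => [a b|a b|a b||] /=.
- rewrite (hom_meet hz) /= /Cmeet; case: leqP => h; first by rewrite mono.
  by case: leqP => h3 //; apply: esym; apply: antisym h (mono _ _ (ltnW h)) h3.
- rewrite (hom_join hz) /= /Cjoin; case: leqP => h; first by rewrite mono.
  by case: leqP => h3 //; apply: antisym h (mono _ _ (ltnW h)) h3.
- rewrite (hom_imp hz) /= /Cimp; case: leqP => h; first by rewrite mono.
  by case: leqP => h3 //; rewrite (st _ _ h h3).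
- by rewrite (hom_bot hz).
- by rewrite (hom_top hz).
Qed.

Lemma comp_hom (A B : halg) (f : A -> B) (y : B -> C n) :
  is_hom f -> is_hom y -> @is_hom A (C n) (fun a => y (f a)).
Proof.
move=> hf hy; split => [a b|a b|a b||] /=.
- by rewrite (hom_meet hf) (hom_meet hy).
- by rewrite (hom_join hf) (hom_join hy).
- by rewrite (hom_imp hf) (hom_imp hy).
- by rewrite (hom_bot hf) (hom_bot hy).
- by rewrite (hom_top hf) (hom_top hy).
Qed.

Lemma proj_hom (A : halg) (I : Type) (e : A -> Defs.Pow (C n) I) (i : I) :
  is_hom e -> @is_hom A (C n) (fun a => e a i).
Proof.
move=> he; split => [a b|a b|a b||] /=.
- by rewrite (hom_meet he).
- by rewrite (hom_join he).
- by rewrite (hom_imp he).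
- by rewrite (hom_bot he).
- by rewrite (hom_top he).
Qed.

Definition collapse (t : nat) (k : T) : T := if t <= k then ord_max else k.

Lemma collapse_hom (A : halg) (z : A -> C n) t : is_hom z -> 0 < t ->
  @is_hom A (C n) (fun a => collapse t (z a)).
Proof.
move=> hz t0; apply: relabel_hom => //; rewrite /collapse.
- by rewrite leqNgt t0.
- by case: leqP.
- move=> a b h; have := ltn_ord (z a); have := ltn_ord (z b).
  by case: (leqP t (z a)); case: (leqP t (z b)) => /=; lia.
- move=> a b h; have := ltn_ord (z a).
  by case: (leqP t (z b)) => // ?; case: (leqP t (z a)) => /=; lia.
Qed.

Lemma separating_points (A : halg) (HA : inG n A) (a b : A) : a <> b ->
  exists x : A -> C n, is_hom x /\ x a <> x b.
Proof.
case: HA => I [e [he einj]] ab.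
have [i hi] : exists i, e a i <> e b i.
  by apply/existsNP => eab; apply/ab/einj/funext.
by exists (fun c => e c i); split => //; apply: proj_hom.
Qed.

Lemma separating_hom (B : halg) (HB : inG n B) (b d : B) : himp b d <> htop B ->
  exists z : B -> C n, [/\ is_hom z, z b = ord_max & z d <> ord_max].
Proof.
case: HB => I [e [he einj]] bd.
have [i hi] : exists i, e (himp b d) i <> ord_max.
  apply/existsNP => etop; apply/bd/einj/funext => i.
  by rewrite etop (hom_top he).
pose z0 c := e c i; have hz0 : @is_hom B (C n) z0 by apply: proj_hom.
have lt : z0 d < z0 b.
  by move/eqP: hi; rewrite (hom_imp he) /= Cimp_top /z0; lia.
exists (fun c => collapse (z0 b) (z0 c)); split.
- by apply: collapse_hom => //; lia.
- by rewrite /collapse leqnn.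
- rewrite /collapse leqNgt lt /= => /(congr1 val) /=.
  by have := ltn_ord (z0 b); lia.
Qed.

End Chain.

Section SimKernel.
Variables (n : nat) (s : Sigma n).

Lemma sigma_comp_mid (i : nat) : 1 <= i <= n - 3 ->
  sigma_comp s i = Defs.fmap i \/ sigma_comp s i = gmap i.
Proof.
move=> /andP[h1 h2]; rewrite /sigma_comp.
have -> : (i == 0) = false by case: i h1 h2.
case: insubP => [j _ _ | /negP H]; first by case: (s.1 j); [left|right].
by exfalso; apply: H; lia.
Qed.

Lemma fmap_inj i k k' m : Defs.fmap i k = Some m -> Defs.fmap i k' = Some m -> k = k'.
Proof. by rewrite /Defs.fmap; do 4 (case: eqP => ? //); move=> [] ? [] ?; lia. Qed.

Lemma gmap_inj i k k' m : gmap i k = Some m -> gmap i k' = Some m -> k = k'.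
Proof. by rewrite /gmap; do 4 (case: eqP => ? //); move=> [] ? [] ?; lia. Qed.

Lemma lifted_eq (A : halg) (sg : nat -> option nat)
  (inj : forall k k' m, sg k = Some m -> sg k' = Some m -> k = k')
  (z z' : A -> C n) a b :
  (forall a, sg (z a) = Some (nat_of_ord (z' a))) ->
  ((z a : nat) = z b <-> (z' a : nat) = z' b).
Proof.
move=> L; split => e.
- by have := L a; rewrite e L => -[].
- by apply: (inj _ _ (z' a)); [exact: L | rewrite e L].
Qed.

Lemma sim_eq (A : halg) (z z' : A -> C n) a b : sim s z z' ->
  ((z a : nat) = z b <-> (z' a : nat) = z' b).
Proof.
elim => {z z'} [z z' [_ [_ [i [hi L]]]] | // | z1 z2 z3 _ IH1 _ IH2]; last first.
  by rewrite IH1.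
have [sg inj E] : exists2 sg : nat -> option nat,
    (forall k k' m, sg k = Some m -> sg k' = Some m -> k = k') & sigma_comp s i = sg.
  by case: (sigma_comp_mid hi) => E; [exists (Defs.fmap i)|exists (gmap i)];
     rewrite ?E //; [exact: fmap_inj | exact: gmap_inj].
rewrite /lifted E in L; case: L => L; first exact: lifted_eq L.
by apply: iff_sym; apply: lifted_eq L.
Qed.

Lemma sim_sym (A : halg) (z z' : A -> C n) : sim s z z' -> sim s z' z.
Proof.
elim => {z z'} [z z' [h1 [h2 [i [hi L]]]] | z | z1 z2 z3 _ IH1 _ IH2].
- by apply: rt_step; split => //; split => //; exists i; split => //; case: L; auto.
- exact: rt_refl.
- exact: rt_trans IH2 IH1.
Qed.

End SimKernel.

Section NormalForm.
Variables (n : nat) (s : Sigma n).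
Local Notation T := 'I_n.-1.+1.

Definition ordeq (A : halg) (u x : A -> C n) := forall a b, (u a <= u b) = (x a <= x b).

Definition packed (A : halg) (z : A -> C n) :=
  forall a, 1 < z a -> z a < n.-1 -> exists a', (z a' : nat) = (z a).-1.

(* The set of values of z, and its sum, the measure for normalization. *)
Definition img (A : halg) (z : A -> C n) : {set T} := [set k | `[< exists a, z a = k >]].
Definition weight (A : halg) (z : A -> C n) : nat := \sum_(k in img z) k.

Section Lower.
Variables (A : halg) (z : A -> C n) (a0 : A).
Let v := z a0.
Hypotheses (hz : is_hom z) (v_gt1 : 1 < v) (v_ltmax : v < n.-1).
Hypothesis gap : forall a, (z a : nat) <> v.-1.

Let w : T := inord v.-1.
Let wE : (w : nat) = v.-1.
Proof. by rewrite inordK //; have := ltn_ord v; lia. Qed.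

Definition lower (k : T) : T := if k == v then w else k.
Let z' a := lower (z a).

Lemma lowerE k : (lower k : nat) = if (k : nat) == v then v.-1 else k.
Proof.
rewrite /lower; case: eqP => [->|ne]; first by rewrite eqxx.
by case: eqP => // e; case: ne; apply: val_inj.
Qed.

Lemma lower_mono a b : (z' a <= z' b) = (z a <= z b).
Proof.
rewrite /z' !lowerE; have := @gap a; have := @gap b.
by do 2 case: eqP => ?; move=> ? ?; apply/idP/idP; lia.
Qed.

Lemma lower_hom : @is_hom A (C n) z'.
Proof.
apply: relabel_hom => //.
- by apply: val_inj; rewrite /= lowerE; case: eqP => //= e; lia.
- by apply: val_inj; rewrite /= lowerE; case: eqP => //= e; lia.
- by move=> a b; rewrite lower_mono.
- by move=> a b; rewrite ltnNge -lower_mono => /negP.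
Qed.

(* z' = g_{v-1} o z, and equally z = f_{v-1} o z'. *)
Lemma lower_step : sim_step s z z'.
Proof.
split=> //; split; first exact: lower_hom.
exists v.-1; split; first by lia.
have hi : 1 <= v.-1 <= n - 3 by lia.
case: (sigma_comp_mid s hi) => E; [right|left] => a;
  rewrite /lifted E /Defs.fmap /gmap /z' lowerE; have := @gap a;
  by case: ((z a : nat) =P v) => e hza; rewrite ?e ?eqxx;
     repeat (case: eqP => ?); try congr Some; lia.
Qed.

Lemma lower_img : img z' = w |: (img z :\ v).
Proof.
apply/setP => k; rewrite !inE; apply/asboolP/idP => [[a <-]|].
- rewrite /z' /lower; case: (z a =P v) => [_|/eqP av]; first by rewrite eqxx.
  by apply/orP; right; rewrite av; apply/asboolP; exists a.
- case/orP => [/eqP ->|/andP [kv /asboolP [a za]]].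
  + by exists a0; rewrite /z' /lower eqxx.
  + by exists a; rewrite /z' /lower za (negbTE kv).
Qed.

Lemma lower_weight : weight z' < weight z.
Proof.
have vS : v \in img z by rewrite inE; apply/asboolP; exists a0.
have wS : w \notin img z :\ v.
  rewrite !inE negb_and; apply/orP; right.
  by apply/asboolP => -[a za]; apply: (@gap a); rewrite za wE.
rewrite /weight lower_img big_setU1 //= [in X in _ < X](big_setD1 v) //= wE.
by rewrite ltn_add2r; lia.
Qed.

End Lower.

Lemma normalize (A : halg) (z : A -> C n) : is_hom z ->
  exists2 z', packed z' & [/\ is_hom z', sim s z z' & ordeq z z'].
Proof.
move=> hz; have [m hm] := ubnP (weight z); elim: m z hz hm => // m IH z hz hm.
have [pz|] := pselect (packed z).
  by exists z => //; split => //; exact: rt_refl.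
move=> /existsNP [a0 /not_implyP [h1 /not_implyP [h2 /forallNP gap]]].
have [z'' pz'' [hz'' sim'' od'']] :=
  IH _ (lower_hom hz h1 h2 gap) (leq_trans (lower_weight h1 h2 gap) hm).
exists z'' => //; split => //.
- exact: rt_trans (rt_step _ _ _ _ (lower_step hz h1 h2 gap)) sim''.
- by move=> a b; rewrite -(lower_mono h1 h2 gap) od''.
Qed.

Lemma packed_down (A : halg) (z : A -> C n) : is_hom z -> packed z ->
  forall a, z a < n.-1 -> forall w, w <= z a -> exists a', (z a' : nat) = w.
Proof.
move=> hz pz a ha w hw.
suff H d : d <= z a -> exists a', (z a' : nat) = z a - d.
  by have [a' e] := H (z a - w) (leq_subr _ _); exists a'; rewrite e; lia.
elim: d => [|d IH] hd; first by exists a; rewrite subn0.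
have [a' e] := IH (ltnW hd).
case: (ltnP 1 (z a')) => h1.
  by have [a'' e''] := pz a' h1 ltac:(lia); exists a''; lia.
by exists (hbot A); rewrite (hom_bot hz) /=; lia.
Qed.

(* A packed homomorphism is pointwise below any one with the same preorder,
   away from top: the values 0, 1, ..., u a are attained along a chain that
   the other homomorphism must climb strictly. *)
Lemma packed_le (A : halg) (u x : A -> C n) : is_hom u -> packed u -> ordeq u x ->
  forall a, u a < n.-1 -> u a <= x a.
Proof.
move=> hu pu od a ua.
have climb w : w <= u a -> exists2 a', (u a' : nat) = w & w <= x a'.
  elim: w => [|w IH] hw; first by exists (hbot A); rewrite ?(hom_bot hu).
  have [a' ua' le'] := IH (ltnW hw).
  have [a'' ua''] := packed_down hu pu ua hw.
  by exists a'' => //; have := od a'' a'; rewrite ua' ua'' ltnn => /esym/negbT; lia.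
have [a' ua' le'] := climb _ (leqnn _).
by have := od a' a; rewrite ua' leqnn => /esym; lia.
Qed.

Lemma packed_unique (A : halg) (u x : A -> C n) : is_hom u -> is_hom x ->
  packed u -> packed x -> ordeq u x -> u = x.
Proof.
move=> hu hx pu px od; apply: funext => a; apply: val_inj => /=.
have := od (htop A) a; rewrite (hom_top hu) (hom_top hx) /=.
have := ltn_ord (u a); have := ltn_ord (x a).
case: (ltnP (x a) n.-1) => xa; case: (ltnP (u a) n.-1) => ua /= ? ? topE; try lia.
have od' : ordeq x u by move=> ? ?; rewrite od.
by apply/eqP; rewrite eqn_leq (packed_le hu pu od) // (packed_le hx px od').
Qed.

Lemma ordeq_sim (A : halg) (u x : A -> C n) :
  is_hom u -> is_hom x -> ordeq u x -> sim s u x.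
Proof.
move=> hu hx od.
have [u' pu' [hu' su ou]] := normalize hu.
have [x' px' [hx' sx ox]] := normalize hx.
have eq_ux : u' = x' by apply: packed_unique => // a b; rewrite -ou od ox.
by apply: rt_trans su _; rewrite eq_ux; apply: sim_sym.
Qed.

(* The preorder induced by a homomorphism into C_n is determined by the
   preimage of top, since a <= b iff a -> b is sent to top. *)
Lemma top_ordeq (A : halg) (u x : A -> C n) : is_hom u -> is_hom x ->
  (forall a, u a = ord_max <-> x a = ord_max) -> ordeq u x.
Proof.
move=> hu hx top a b; rewrite -!Cimp_top.
rewrite -[Cimp (u a) _](hom_imp hu) -[Cimp (x a) _](hom_imp hx).
by apply/eqP/eqP => /top.
Qed.

End NormalForm.

Section Ultralimit.
Variables (H : Type) (G : set_system H) (m : nat).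
Hypothesis UG : UltraFilter G.

Lemma ultra_value (g : H -> 'I_m) : exists v, G [set h | g h = v].
Proof.
apply: contrapT => /forallNP none.
have Gc v : G (~` [set h | g h = v]).
  by case: (in_ultra_setVsetC [set h | g h = v] UG) => // /none.
have Gk k : k <= m -> G [set h | k <= g h].
  elim: k => [|k IH] hk; first by apply: filterS filterT.
  apply: filterS (filterI (IH (ltnW hk)) (Gc (Ordinal hk))) => h [/= le ne].
  by rewrite ltn_neqAle le andbT; apply/eqP => e; apply/ne/val_inj.
apply: (filter_not_empty G); apply: filterS (Gk _ (leqnn _)) => h /=.
by rewrite leqNgt ltn_ord.
Qed.

Lemma ultra_value_unique (g : H -> 'I_m) v v' :
  G [set h | g h = v] -> G [set h | g h = v'] -> v = v'.
Proof.
move=> Gv Gv'; apply: contrapT => ne; apply: (filter_not_empty G).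
by apply: filterS (filterI Gv Gv') => h [/= e e']; apply: ne; rewrite -e -e'.
Qed.

Variables (B : Type) (g : H -> B -> 'I_m).

Lemma ultralimit_exists : exists y : B -> 'I_m, forall b, G [set h | g h b = y b].
Proof. by have [y yP] := choice (fun b => ultra_value (g^~ b)); exists y. Qed.

Variables (y : B -> 'I_m).
Hypothesis yP : forall b, G [set h | g h b = y b].

Lemma ultralimit_op2 (op : B -> B -> B) (opm : 'I_m -> 'I_m -> 'I_m) :
  (forall h b b', g h (op b b') = opm (g h b) (g h b')) ->
  forall b b', y (op b b') = opm (y b) (y b').
Proof.
move=> gop b b'; apply: ultra_value_unique (yP _) _.
by apply: filterS (filterI (yP b) (yP b')) => h [/= e e']; rewrite gop e e'.
Qed.

Lemma ultralimit_const (c : B) (v : 'I_m) : (forall h, g h c = v) -> y c = v.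
Proof. by move=> gc; apply: ultra_value_unique (yP c) _; apply: filterS filterT => h _. Qed.

End Ultralimit.

(* It is the ultralimit
   of the homomorphisms separating the pairs (b, d), taken along an
   ultrafilter containing all the sets of such separating homomorphisms. *)
Section Extension.
Variables (n : nat) (B : halg).
Hypothesis HB : inG n B.
Variables Top NonTop : B -> Prop.
Hypotheses (Top_top : Top (htop B)) (NonTop_bot : NonTop (hbot B)).
Hypothesis Top_meet : forall b b', Top b -> Top b' -> Top (hmeet b b').
Hypothesis NonTop_join : forall d d', NonTop d -> NonTop d' -> NonTop (hjoin d d').
Hypothesis Top_NonTop : forall b d, Top b -> NonTop d -> himp b d <> htop B.

Local Notation Hom := {z : B -> C n | is_hom z}.

Definition topset (b : B) : set Hom := [set z | sval z b = ord_max].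

Definition sep_filter : set_system Hom :=
  [set S | exists b d, [/\ Top b, NonTop d & topset b `&` ~` topset d `<=` S]].

Lemma sep_filter_proper : ProperFilter sep_filter.
Proof.
split.
- move=> [b [d [tb nd sub]]].
  have [z [hz zb zd]] := separating_hom HB (Top_NonTop tb nd).
  exact: (sub (exist _ z hz)).
- split.
  + by exists (htop B), (hbot B).
  + move=> S1 S2 [b1 [d1 [t1 n1 s1]]] [b2 [d2 [t2 n2 s2]]].
    exists (hmeet b1 b2), (hjoin d1 d2); split; [exact: Top_meet | exact: NonTop_join |].
    move=> [z hz] [/= zm zj]; rewrite /topset /= (hom_meet hz) in zm.
    rewrite /topset /= (hom_join hz) in zj.
    have [zb1 zb2] := Cmeet_max zm.
    by split; [apply: s1 | apply: s2]; split => //= zd; apply: zj; apply: Cjoin_max; auto.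
  + move=> P Q PQ [b [d [tb nd sub]]]; exists b, d; split => //.
    exact: subset_trans sub PQ.
Qed.

Lemma hom_extension : exists y : B -> C n,
  [/\ is_hom y, forall b, Top b -> y b = ord_max & forall d, NonTop d -> y d <> ord_max].
Proof.
have [G [UG FG]] := ultraFilterLemma sep_filter_proper.
have [y yP] := ultralimit_exists UG (fun (h : Hom) => sval h).
have limit2 := ultralimit_op2 UG yP; have limit0 := ultralimit_const UG yP.
exists y; split.
- split => [b b'|b b'|b b'||].
  + by apply: limit2 => -[z hz] ? ?; exact: (hom_meet hz).
  + by apply: limit2 => -[z hz] ? ?; exact: (hom_join hz).
  + by apply: limit2 => -[z hz] ? ?; exact: (hom_imp hz).
  + by apply: limit0 => -[z hz]; exact: (hom_bot hz).
  + by apply: limit0 => -[z hz]; exact: (hom_top hz).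
- move=> b tb; apply: ultra_value_unique (yP b) _.
  by apply: FG; exists b, (hbot B); split => // z [].
- move=> d nd yd.
  have Gc : G (~` topset d) by apply: FG; exists (htop B), d; split => // z [].
  apply: (filter_not_empty G); apply: filterS (filterI Gc (yP d)) => z [/= nz e].
  by apply: nz; rewrite /topset /= e yd.
Qed.

End Extension.

Lemma embedding_extension (n : nat) (A B : halg) (f : A -> B) (x : A -> C n) :
  1 < n -> inG n B -> is_hom f -> injective f -> is_hom x ->
  exists y : B -> C n, is_hom y /\ forall a, y (f a) = ord_max <-> x a = ord_max.
Proof.
move=> n1 HB hf finj hx.
pose Top b := exists2 a, x a = ord_max & b = f a.
pose NonTop d := exists2 c, x c <> ord_max & d = f c.
have [||||| y [hy yT yN]] := @hom_extension n B HB Top NonTop.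
- by exists (htop A); rewrite ?(hom_top hx) ?(hom_top hf).
- exists (hbot A); last by rewrite (hom_bot hf).
  by rewrite (hom_bot hx) => /(congr1 val) /=; lia.
- move=> _ _ [a xa ->] [a' xa' ->]; exists (hmeet a a'); last by rewrite (hom_meet hf).
  by rewrite (hom_meet hx) /= xa xa' /Cmeet leqnn.
- move=> _ _ [c xc ->] [c' xc' ->]; exists (hjoin c c'); last by rewrite (hom_join hf).
  by rewrite (hom_join hx) /= /Cjoin; case: leqP.
- move=> _ _ [a xa ->] [c xc ->]; rewrite -(hom_imp hf) -(hom_top hf) => /finj ac.
  apply: xc; move/eqP: (hom_imp hx a c); rewrite ac (hom_top hx) xa eq_sym /= Cimp_top.
  by move=> le; apply/eqP; rewrite eq_max; move: le; rewrite /=; lia.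
exists y; split => // a; split => [yfa|xa]; last by apply: yT; exists a.
by apply: contrapT => xa; apply: (yN (f a)) yfa; exists a.
Qed.

Theorem lemma6p3 (n : nat) (A B : halg) (hn : 4 <= n)
  (HA : inG n A) (HB : inG n B) (f : A -> B) (hf : is_hom f) (s : Sigma n) :
  injective f <->
  (forall x : A -> C n, is_hom x ->
     exists y : B -> C n, is_hom y /\ sim s (fun a => y (f a)) x).
Proof.
have hyf y : is_hom y -> @is_hom A (C n) (fun a => y (f a)) by exact: comp_hom.
split => [finj x hx | H a b fab].
- have [y [hy ytop]] := embedding_extension (ltac:(lia) : 1 < n) HB hf finj hx.
  exists y; split => //; apply: (ordeq_sim s (hyf _ hy) hx).
  exact: top_ordeq (hyf _ hy) hx ytop.
- apply: contrapT => ab.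
  have [x [hx xab]] := separating_points HA ab.
  have [y [hy sim_yx]] := H x hx.
  by apply/xab/val_inj; apply: (sim_eq a b sim_yx).1 => /=; rewrite fab.
Qed.
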